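(* In the FitzHugh–Nagumo setup, suppose $0<\epsilon<\frac{c^4}{16}$. Let $\lambda\ge0$ be a real eigenvalue of $L_\epsilon$ and $P=(p,q)$ a corresponding nonzero real-valued eigenfunction. Then $$\int_{-\infty}^{\infty}e^{cz}\Big(p(z)^2-\frac{q(z)^2}{\epsilon}\Big)\,dz>0.$$
   Context: FitzHugh–Nagumo setup. Fix $0<a<1/2$, $\gamma>0$, $\epsilon>0$, and $g(u)=u(1-u)(u-a)$. Consider $u_t=u_{xx}+g(u)-v$, $v_t=v_{xx}+\epsilon(u-\gamma v)$. Let $c<0$ and let $(\hat u,\hat v)(z)$, $z=x-ct$, be a traveling pulse: a solution of $\hat u''+c\hat u'+g(\hat u)-\hat v=0$, $\hat v''+c\hat v'+\epsilon(\hat u-\gamma\hat v)=0$ tending to $0$ exponentially (with derivatives) as $z\to\pm\infty$. Linearized operator: $L_\epsilon=\partial_z^2+c\partial_z+\begin{pmatrix}g'(\hat u)&-1\\ \epsilon&-\epsilon\gamma\end{pmatrix}$; $\lambda$ is an eigenvalue if $L_\epsilon P=\lambda P$ has a nonzero bounded uniformly continuous solution $P$ (such eigenfunctions decay exponentially at both ends, fast enough that the integral above converges). *)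

From Stdlib Require Import Reals.
Open Scope R_scope.

Definition g (a u : R) : R := u * (1 - u) * (u - a).
Definition g' (a u : R) : R := - 3 * u ^ 2 + 2 * (1 + a) * u - a.

Definition twice_diff (f f1 f2 : R -> R) : Prop :=
  (forall z, derivable_pt_lim f z (f1 z)) /\ (forall z, derivable_pt_lim f1 z (f2 z)).

Definition traveling_pulse (a gamma eps c : R)
    (uh uh1 uh2 vh vh1 vh2 : R -> R) : Prop :=
  twice_diff uh uh1 uh2 /\ twice_diff vh vh1 vh2 /\
  (forall z, uh2 z + c * uh1 z + g a (uh z) - vh z = 0) /\
  (forall z, vh2 z + c * vh1 z + eps * (uh z - gamma * vh z) = 0) /\
  (exists K mu, 0 < mu /\ forall z,
     Rabs (uh z) + Rabs (uh1 z) + Rabs (uh2 z)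
     + Rabs (vh z) + Rabs (vh1 z) + Rabs (vh2 z) <= K * exp (- mu * Rabs z)).

Definition bounded_fun (f : R -> R) : Prop := exists M, forall z, Rabs (f z) <= M.

Definition unif_cont (f : R -> R) : Prop :=
  forall e, 0 < e -> exists d, 0 < d /\
    forall x y, Rabs (x - y) < d -> Rabs (f x - f y) < e.

(* P = (p,q) (with derivatives p1,p2,q1,q2) is a nonzero bounded uniformly
   continuous solution of L_eps P = lambda P, where
   L_eps = d^2/dz^2 + c d/dz + [[g'(uh), -1], [eps, -eps*gamma]]. *)
Definition eigenfunction (a gamma eps c : R) (uh : R -> R) (lambda : R)
    (p p1 p2 q q1 q2 : R -> R) : Prop :=
  twice_diff p p1 p2 /\ twice_diff q q1 q2 /\
  (forall z, p2 z + c * p1 z + g' a (uh z) * p z - q z = lambda * p z) /\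
  (forall z, q2 z + c * q1 z + eps * p z - eps * gamma * q z = lambda * q z) /\
  bounded_fun p /\ bounded_fun q /\ unif_cont p /\ unif_cont q /\
  (exists z, p z <> 0 \/ q z <> 0).

Definition improper_integral_R (f : R -> R) (I : R) : Prop :=
  exists F : R -> R, exists Lm Lp : R,
    (forall z, derivable_pt_lim F z (f z)) /\
    (forall e, 0 < e -> exists A, forall z, A <= z -> Rabs (F z - Lp) < e) /\
    (forall e, 0 < e -> exists A, forall z, z <= A -> Rabs (F z - Lm) < e) /\
    I = Lp - Lm.

From Stdlib Require Import Reals Lra Psatz Classical.
From Coquelicot Require Import Coquelicot.
Open Scope R_scope.

(* With [P = e^{cz/2} p] and [Q = e^{cz/2} q] the integrand becomes [P^2 - Q^2/eps], and the
   eigenvalue equation for [q] loses its drift: [Q'' = k Q - eps P] with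
   [k = c^2/4 + lambda + eps gamma].  Hence, with [beta = 2k/eps^2],
     [P^2 - Q^2/eps = E - beta (Q Q')'],
     [E = beta Q'^2 + (P - (k/eps) Q)^2 + ((k^2 - eps)/eps^2) Q^2].
   The boundary term vanishes by the exponential decay, and since [eps < c^4/16 <= k^2]
   the energy [E] is a sum of squares with positive weights, positive where [(p, q) <> 0]. *)

Definition lim_pinfty (F : R -> R) (L : R) : Prop :=
  forall e, 0 < e -> exists A, forall z, A <= z -> Rabs (F z - L) < e.

Definition lim_minfty (F : R -> R) (L : R) : Prop :=
  forall e, 0 < e -> exists A, forall z, z <= A -> Rabs (F z - L) < e.

Lemma lim_pinfty_sub F G L M :
  lim_pinfty F L -> lim_pinfty G M -> lim_pinfty (fun z => F z - G z) (L - M).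
Proof.
  intros HF HG e He.
  destruct (HF (e / 2)) as [A1 H1]; [lra|]. destruct (HG (e / 2)) as [A2 H2]; [lra|].
  exists (Rmax A1 A2); intros z Hz.
  specialize (H1 z (Rle_trans _ _ _ (Rmax_l _ _) Hz)).
  specialize (H2 z (Rle_trans _ _ _ (Rmax_r _ _) Hz)).
  apply Rabs_def2 in H1, H2. apply Rabs_def1; lra.
Qed.

Lemma lim_minfty_sub F G L M :
  lim_minfty F L -> lim_minfty G M -> lim_minfty (fun z => F z - G z) (L - M).
Proof.
  intros HF HG e He.
  destruct (HF (e / 2)) as [A1 H1]; [lra|]. destruct (HG (e / 2)) as [A2 H2]; [lra|].
  exists (Rmin A1 A2); intros z Hz.
  specialize (H1 z (Rle_trans _ _ _ Hz (Rmin_l _ _))).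
  specialize (H2 z (Rle_trans _ _ _ Hz (Rmin_r _ _))).
  apply Rabs_def2 in H1, H2. apply Rabs_def1; lra.
Qed.

Lemma increasing_of_deriv_nonneg (F F' : R -> R) :
  (forall z, derivable_pt_lim F z (F' z)) -> (forall z, 0 <= F' z) -> increasing F.
Proof.
  intros HF HF'.
  set (pr z := exist _ (F' z) (HF z) : derivable_pt F z).
  apply (nonneg_derivative_1 F pr). intro z.
  replace (derive_pt F z (pr z)) with (F' z); [apply HF'|].
  symmetry; apply derive_pt_eq_0, HF.
Qed.

Lemma increment_le_of_deriv_le (F F' H H' : R -> R) :
  (forall z, derivable_pt_lim F z (F' z)) -> (forall z, derivable_pt_lim H z (H' z)) ->
  (forall z, F' z <= H' z) -> forall x y, x <= y -> F y - F x <= H y - H x.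
Proof.
  intros HF HH Hle x y Hxy.
  assert (Hmono := increasing_of_deriv_nonneg (fun z => H z - F z) (fun z => H' z - F' z)
    (fun z => derivable_pt_lim_minus H F z _ _ (HH z) (HF z))
    (fun z => ltac:(specialize (Hle z); lra)) x y Hxy).
  simpl in Hmono; lra.
Qed.

Lemma deriv_pos_increases F l z :
  derivable_pt_lim F z l -> 0 < l -> exists t, 0 < t /\ F z < F (z + t).
Proof.
  intros HF Hl. destruct (HF l Hl) as [[d Hd] Hlim]. simpl in Hlim.
  exists (d / 2). split; [lra|].
  specialize (Hlim (d / 2) ltac:(lra) ltac:(rewrite Rabs_right; lra)).
  apply Rabs_def2 in Hlim.
  assert (Hq : 0 < (F (z + d / 2) - F z) / (d / 2)) by lra.
  apply Rdiv_pos_cases in Hq as [[]|[]]; lra.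
Qed.

Lemma lim_pinfty_increasing_bounded F M :
  increasing F -> (forall z, F z <= M) -> exists L, lim_pinfty F L.
Proof.
  intros Hmono HM.
  destruct (completeness (fun y => exists z, y = F z)) as [L [Hub Hlub]].
  - exists M. intros y [z ->]. apply HM.
  - exists (F 0), 0. reflexivity.
  - exists L. intros e He.
    destruct (classic (exists z, L - e < F z)) as [[z Hz]|Hn].
    + exists z. intros w Hw.
      assert (F z <= F w) by (apply Hmono; lra).
      assert (F w <= L) by (apply Hub; exists w; reflexivity).
      apply Rabs_def1; lra.
    + assert (L <= L - e); [|lra].
      apply Hlub. intros y [z ->]. apply Rnot_lt_le. intro Hz. apply Hn. now exists z.
Qed.

Lemma lim_minfty_increasing_bounded F M :
  increasing F -> (forall z, M <= F z) -> exists L, lim_minfty F L.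
Proof.
  intros Hmono HM.
  destruct (lim_pinfty_increasing_bounded (fun z => - F (- z)) (- M)) as [L HL].
  - intros x y Hxy. assert (F (- y) <= F (- x)) by (apply Hmono; lra). lra.
  - intro z. specialize (HM (- z)). lra.
  - exists (- L). intros e He. destruct (HL e He) as [A HA].
    exists (- A). intros z Hz. specialize (HA (- z) ltac:(lra)).
    rewrite Ropp_involutive in HA.
    replace (F z - - L) with (- (- F z - L)) by ring. now rewrite Rabs_Ropp.
Qed.

Lemma le_lim_pinfty_increasing F L : increasing F -> lim_pinfty F L -> forall z, F z <= L.
Proof.
  intros Hmono HL z. apply Rnot_lt_le; intro Hz.
  destruct (HL (F z - L)) as [A HA]; [lra|].
  specialize (HA (Rmax A z) (Rmax_l _ _)).
  assert (F z <= F (Rmax A z)) by apply Hmono, Rmax_r.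
  apply Rabs_def2 in HA. lra.
Qed.

Lemma lim_minfty_le_increasing F L : increasing F -> lim_minfty F L -> forall z, L <= F z.
Proof.
  intros Hmono HL z. apply Rnot_lt_le; intro Hz.
  destruct (HL (L - F z)) as [A HA]; [lra|].
  specialize (HA (Rmin A z) (Rmin_l _ _)).
  assert (F (Rmin A z) <= F z) by apply Hmono, Rmin_r.
  apply Rabs_def2 in HA. lra.
Qed.

Definition exp_decay (mu : R) (f : R -> R) : Prop :=
  exists K, forall z, Rabs (f z) <= K * exp (- mu * Rabs z).

Definition quad_decay (f : R -> R) : Prop :=
  exists D, forall z, Rabs (f z) <= D / (1 + z ^ 2).

Lemma exp_neg_abs_sq_le mu z :
  0 < mu -> exp (- mu * Rabs z) ^ 2 <= (1 + / mu ^ 2) / (1 + z ^ 2).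
Proof.
  intros Hmu. set (t := mu * Rabs z).
  assert (Ht : 0 <= t) by (unfold t; pose proof (Rabs_pos z); nra).
  assert (Hinv : exp (- mu * Rabs z) * exp t = 1).
  { rewrite <- exp_plus. replace (- mu * Rabs z + t) with 0 by (unfold t; ring). apply exp_0. }
  assert (Ht2 : t ^ 2 = mu ^ 2 * z ^ 2) by (unfold t; rewrite <- (pow2_abs z); ring).
  pose proof (exp_ineq1_le t). pose proof (exp_pos (- mu * Rabs z)) as He.
  set (e := exp (- mu * Rabs z)) in *.
  assert (Hte : (1 + t) * e <= 1) by nra.
  assert (He2 : (1 + mu ^ 2 * z ^ 2) * e ^ 2 <= 1).
  { rewrite <- Ht2. assert (0 <= (1 + t) * e) by nra. nra. }
  assert (Hz : 0 < 1 + z ^ 2) by (pose proof (pow2_ge_0 z); lra).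
  apply (Rmult_le_reg_r (1 + z ^ 2)); [exact Hz|].
  replace ((1 + / mu ^ 2) / (1 + z ^ 2) * (1 + z ^ 2)) with (1 + / mu ^ 2) by (field; lra).
  assert (Hm : 0 < mu ^ 2) by nra.
  apply (Rmult_le_reg_l (mu ^ 2)); [exact Hm|].
  replace (mu ^ 2 * (1 + / mu ^ 2)) with (mu ^ 2 + 1) by (field; lra).
  pose proof (pow2_ge_0 z). pose proof (pow2_ge_0 e). nra.
Qed.

Lemma exp_decay_plus mu f g :
  exp_decay mu f -> exp_decay mu g -> exp_decay mu (fun z => f z + g z).
Proof.
  intros [K1 H1] [K2 H2]. exists (K1 + K2). intro z.
  eapply Rle_trans; [apply Rabs_triang|]. specialize (H1 z); specialize (H2 z). lra.
Qed.

Lemma exp_decay_sub mu f g :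
  exp_decay mu f -> exp_decay mu g -> exp_decay mu (fun z => f z - g z).
Proof.
  intros [K1 H1] [K2 H2]. exists (K1 + K2). intro z.
  unfold Rminus. eapply Rle_trans; [apply Rabs_triang|]. rewrite Rabs_Ropp.
  specialize (H1 z); specialize (H2 z). lra.
Qed.

Lemma exp_decay_scal mu a f : exp_decay mu f -> exp_decay mu (fun z => a * f z).
Proof.
  intros [K HK]. exists (Rabs a * K). intro z.
  rewrite Rabs_mult, Rmult_assoc. apply Rmult_le_compat_l; [apply Rabs_pos | apply HK].
Qed.

Lemma quad_decay_mul mu f g :
  0 < mu -> exp_decay mu f -> exp_decay mu g -> quad_decay (fun z => f z * g z).
Proof.
  intros Hmu [K1 H1] [K2 H2].
  assert (HK : forall K h, (forall z, Rabs (h z) <= K * exp (- mu * Rabs z)) -> 0 <= K).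
  { intros K h Hh. specialize (Hh 0). pose proof (Rabs_pos (h 0)).
    pose proof (exp_pos (- mu * Rabs 0)). nra. }
  pose proof (HK _ _ H1). pose proof (HK _ _ H2).
  exists (K1 * K2 * (1 + / mu ^ 2)). intro z.
  rewrite Rabs_mult. unfold Rdiv; rewrite Rmult_assoc. fold ((1 + / mu ^ 2) / (1 + z ^ 2)).
  eapply Rle_trans; [apply Rmult_le_compat; [apply Rabs_pos | apply Rabs_pos | apply H1 | apply H2]|].
  replace (K1 * exp (- mu * Rabs z) * (K2 * exp (- mu * Rabs z)))
    with (K1 * K2 * exp (- mu * Rabs z) ^ 2) by ring.
  apply Rmult_le_compat_l; [nra | now apply exp_neg_abs_sq_le].
Qed.

Lemma quad_decay_sq mu f : 0 < mu -> exp_decay mu f -> quad_decay (fun z => f z ^ 2).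
Proof.
  intros Hmu Hf. destruct (quad_decay_mul mu f f Hmu Hf Hf) as [D HD].
  exists D. intro z. rewrite <- Rsqr_pow2. apply HD.
Qed.

Lemma quad_decay_plus f g :
  quad_decay f -> quad_decay g -> quad_decay (fun z => f z + g z).
Proof.
  intros [D1 H1] [D2 H2]. exists (D1 + D2). intro z.
  eapply Rle_trans; [apply Rabs_triang|]. specialize (H1 z); specialize (H2 z).
  unfold Rdiv in *. lra.
Qed.

Lemma quad_decay_scal a f : quad_decay f -> quad_decay (fun z => a * f z).
Proof.
  intros [D HD]. exists (Rabs a * D). intro z.
  rewrite Rabs_mult. unfold Rdiv; rewrite Rmult_assoc.
  apply Rmult_le_compat_l; [apply Rabs_pos | apply HD].
Qed.

Lemma quad_decay_lim h : quad_decay h -> lim_pinfty h 0 /\ lim_minfty h 0.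
Proof.
  intros [D HD].
  assert (HD0 : 0 <= D).
  { specialize (HD 0). pose proof (Rabs_pos (h 0)). simpl in HD. lra. }
  assert (Hsmall : forall e z, 0 < e -> D / e <= Rabs z -> Rabs (h z - 0) < e).
  { intros e z He Hz. rewrite Rminus_0_r. eapply Rle_lt_trans; [apply HD|].
    apply Rle_div_l in Hz; [|exact He].
    rewrite <- pow2_abs. apply Rlt_div_l; [pose proof (pow2_ge_0 (Rabs z)); lra|].
    pose proof (Rabs_pos z). nra. }
  split; intros e He; [exists (D / e) | exists (- (D / e))]; intros z Hz;
    apply Hsmall; auto; [rewrite Rabs_right | rewrite Rabs_left1]; try lra;
    assert (0 <= D / e) by (apply Rdiv_le_0_compat; lra); lra.
Qed.
Lemma RInt_derivable g :
  (forall z, continuity_pt g z) -> forall z, derivable_pt_lim (fun x => RInt g 0 x) z (g z).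
Proof.
  intros Hg z. apply is_derive_Reals.
  assert (Hc : forall x, continuous g x) by (intro x; apply continuity_pt_filterlim, Hg).
  apply (is_derive_RInt g (fun x => RInt g 0 x) 0 z); [|apply Hc].
  exists (mkposreal 1 Rlt_0_1). intros y _.
  apply (@RInt_correct R_CompleteNormedModule), ex_RInt_continuous. intros; apply Hc.
Qed.

Lemma improper_integral_R_pos g z0 :
  (forall z, continuity_pt g z) -> (forall z, 0 <= g z) -> quad_decay g -> 0 < g z0 ->
  exists I, improper_integral_R g I /\ 0 < I.
Proof.
  intros Hcont Hnneg [D HD] Hz0.
  set (G x := RInt g 0 x).
  assert (HG := RInt_derivable g Hcont). fold G in HG.
  assert (Hmono := increasing_of_deriv_nonneg G g HG Hnneg).
  (* [D * atan] is an antiderivative of the bound [D / (1 + z^2)] *)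
  assert (Hincr : forall x y, x <= y -> G y - G x <= D * PI).
  { intros x y Hxy.
    assert (Hatan : forall z, derivable_pt_lim (fun x => D * atan x) z (D / (1 + z ^ 2))).
    { intro z. apply derivable_pt_lim_scal, derivable_pt_lim_atan. }
    assert (Hle := increment_le_of_deriv_le G g _ _ HG Hatan
      (fun z => Rle_trans _ _ _ (Rle_abs _) (HD z)) x y Hxy).
    assert (HD0 : 0 <= D) by (pose proof (HD 0); pose proof (Rabs_pos (g 0)); simpl in *; lra).
    pose proof (atan_bound x). pose proof (atan_bound y). nra. }
  destruct (lim_pinfty_increasing_bounded G (G 0 + D * PI)) as [Lp HLp]; [exact Hmono| |].
  { intro z. destruct (Rle_dec z 0); [assert (G z <= G 0) by (apply Hmono; lra)
      | assert (G z - G 0 <= D * PI) by (apply Hincr; lra)];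
    pose proof (Hincr 0 0 (Rle_refl 0)); lra. }
  destruct (lim_minfty_increasing_bounded G (G 0 - D * PI)) as [Lm HLm]; [exact Hmono| |].
  { intro z. destruct (Rle_dec z 0); [assert (G 0 - G z <= D * PI) by (apply Hincr; lra)
      | assert (G 0 <= G z) by (apply Hmono; lra)];
    pose proof (Hincr 0 0 (Rle_refl 0)); lra. }
  destruct (deriv_pos_increases G (g z0) z0 (HG z0) Hz0) as [t [Ht Hlt]].
  exists (Lp - Lm). split; [now exists G, Lm, Lp|].
  pose proof (le_lim_pinfty_increasing G Lp Hmono HLp (z0 + t)).
  pose proof (lim_minfty_le_increasing G Lm Hmono HLm z0). lra.
Qed.

Lemma improper_integral_R_sub_deriv f d h I :
  improper_integral_R f I -> (forall z, derivable_pt_lim h z (d z)) ->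
  lim_pinfty h 0 -> lim_minfty h 0 -> improper_integral_R (fun z => f z - d z) I.
Proof.
  intros [F [Lm [Lp [HF [HLp [HLm ->]]]]]] Hh Hp Hm.
  exists (fun z => F z - h z), (Lm - 0), (Lp - 0). repeat split.
  - intro z. apply derivable_pt_lim_minus; auto.
  - now apply lim_pinfty_sub.
  - now apply lim_minfty_sub.
  - ring.
Qed.

Lemma improper_integral_R_ext f g I :
  (forall z, f z = g z) -> improper_integral_R f I -> improper_integral_R g I.
Proof.
  intros Hfg [F [Lm [Lp [HF Hlims]]]]. exists F, Lm, Lp. split; [|exact Hlims].
  intro z. rewrite <- Hfg. apply HF.
Qed.

Definition weight (c : R) (f : R -> R) (z : R) : R := exp (c * z / 2) * f z.

Lemma weight_derivable c f f' z :
  derivable_pt_lim f z (f' z) ->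
  derivable_pt_lim (weight c f) z (weight c f' z + c / 2 * weight c f z).
Proof.
  intro Hf. unfold weight.
  replace (exp (c * z / 2) * f' z + c / 2 * (exp (c * z / 2) * f z))
    with (c / 2 * exp (c * z / 2) * f z + exp (c * z / 2) * f' z) by ring.
  apply (derivable_pt_lim_mult (fun z => exp (c * z / 2))); [|exact Hf].
  apply is_derive_Reals. auto_derive; [exact I | unfold Rdiv; ring].
Qed.

Lemma weight_continuous c f z : continuity_pt f z -> continuity_pt (weight c f) z.
Proof.
  intro Hf. apply (continuity_pt_mult (fun z => exp (c * z / 2))); [|exact Hf].
  apply derivable_continuous_pt. exists (c / 2 * exp (c * z / 2)).
  apply is_derive_Reals. auto_derive; [exact I | unfold Rdiv; ring].
Qed.

Lemma exp_decay_weight c mu K f :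
  (forall z, Rabs (f z) <= K * exp (- (c / 2) * z - mu * Rabs z)) ->
  exp_decay mu (weight c f).
Proof.
  intro Hf. exists K. intro z. unfold weight.
  rewrite Rabs_mult, (Rabs_right (exp _)) by (left; apply exp_pos).
  replace (- mu * Rabs z) with (c * z / 2 + (- (c / 2) * z - mu * Rabs z)) by field.
  rewrite exp_plus.
  replace (K * (exp (c * z / 2) * exp (- (c / 2) * z - mu * Rabs z)))
    with (exp (c * z / 2) * (K * exp (- (c / 2) * z - mu * Rabs z))) by ring.
  apply Rmult_le_compat_l; [left; apply exp_pos | apply Hf].
Qed.

Lemma weight_eigenfunction_decay c mu K p p1 q q1 :
  (forall z, Rabs (p z) + Rabs (p1 z) + Rabs (q z) + Rabs (q1 z)
     <= K * exp (- (c / 2) * z - mu * Rabs z)) ->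
  exp_decay mu (weight c p) /\ exp_decay mu (weight c q) /\
  exp_decay mu (fun z => weight c q1 z + c / 2 * weight c q z).
Proof.
  intro Hbound.
  assert (Hdecay : forall f, (forall z, Rabs (f z) <=
      Rabs (p z) + Rabs (p1 z) + Rabs (q z) + Rabs (q1 z)) -> exp_decay mu (weight c f)).
  { intros f Hf. apply (exp_decay_weight c mu K). intro z.
    specialize (Hbound z). specialize (Hf z). lra. }
  repeat split; [| | apply exp_decay_plus; [|apply exp_decay_scal]]; apply Hdecay; intro z;
    pose proof (Rabs_pos (p z)); pose proof (Rabs_pos (p1 z));
    pose proof (Rabs_pos (q z)); pose proof (Rabs_pos (q1 z)); lra.
Qed.

Lemma weight_second_derivable c m eps p q q1 q2 z :
  derivable_pt_lim q z (q1 z) -> derivable_pt_lim q1 z (q2 z) ->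
  q2 z + c * q1 z = m * q z - eps * p z ->
  derivable_pt_lim (fun z => weight c q1 z + c / 2 * weight c q z) z
    ((c ^ 2 / 4 + m) * weight c q z - eps * weight c p z).
Proof.
  intros Hq Hq1 Heq.
  replace ((c ^ 2 / 4 + m) * weight c q z - eps * weight c p z)
    with ((weight c q2 z + c / 2 * weight c q1 z) + c / 2 * (weight c q1 z + c / 2 * weight c q z)).
  - apply derivable_pt_lim_plus; [|apply derivable_pt_lim_scal]; apply weight_derivable; assumption.
  - unfold weight. replace (q2 z) with (m * q z - eps * p z - c * q1 z) by lra. field.
Qed.

Section WeightedEnergy.

Variables (eps k mu : R) (P Q Q1 : R -> R).
Hypotheses (eps_pos : 0 < eps) (k_pos : 0 < k) (eps_lt_sq_k : eps < k ^ 2) (mu_pos : 0 < mu).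
Hypothesis Q_deriv : forall z, derivable_pt_lim Q z (Q1 z).
Hypothesis Q1_deriv : forall z, derivable_pt_lim Q1 z (k * Q z - eps * P z).
Hypothesis P_cont : forall z, continuity_pt P z.
Hypotheses (P_decay : exp_decay mu P) (Q_decay : exp_decay mu Q) (Q1_decay : exp_decay mu Q1).
Hypothesis PQ_nonzero : exists z, P z <> 0 \/ Q z <> 0.

Definition energy (z : R) : R :=
  2 * k / eps ^ 2 * Q1 z ^ 2 + (P z - k / eps * Q z) ^ 2 + (k ^ 2 - eps) / eps ^ 2 * Q z ^ 2.

Lemma energy_identity z :
  P z ^ 2 - Q z ^ 2 / eps
  = energy z - 2 * k / eps ^ 2 * (Q1 z * Q1 z + Q z * (k * Q z - eps * P z)).
Proof. unfold energy. field. lra. Qed.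

Lemma energy_nonneg z : 0 <= energy z.
Proof.
  unfold energy.
  assert (0 <= 2 * k / eps ^ 2) by (apply Rdiv_le_0_compat; nra).
  assert (0 <= (k ^ 2 - eps) / eps ^ 2) by (apply Rdiv_le_0_compat; nra).
  pose proof (pow2_ge_0 (Q1 z)). pose proof (pow2_ge_0 (P z - k / eps * Q z)).
  pose proof (pow2_ge_0 (Q z)). nra.
Qed.

Lemma energy_pos : exists z, 0 < energy z.
Proof.
  destruct PQ_nonzero as [z Hz]. exists z. unfold energy.
  assert (0 <= 2 * k / eps ^ 2 * Q1 z ^ 2)
    by (apply Rmult_le_pos; [apply Rdiv_le_0_compat; nra | apply pow2_ge_0]).
  assert (Hs : 0 < (k ^ 2 - eps) / eps ^ 2) by (apply Rdiv_lt_0_compat; nra).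
  destruct (Req_dec (Q z) 0) as [HQ|HQ].
  - destruct Hz as [HP|]; [|contradiction].
    rewrite HQ, Rmult_0_r, Rminus_0_r. pose proof (pow2_gt_0 _ HP). nra.
  - pose proof (pow2_gt_0 _ HQ). pose proof (pow2_ge_0 (P z - k / eps * Q z)). nra.
Qed.

Lemma energy_continuous z : continuity_pt energy z.
Proof.
  assert (HQ : continuity_pt Q z) by (apply derivable_continuous_pt; eexists; apply Q_deriv).
  assert (HQ1 : continuity_pt Q1 z) by (apply derivable_continuous_pt; eexists; apply Q1_deriv).
  unfold energy. reg. apply P_cont.
Qed.

Lemma energy_quad_decay : quad_decay energy.
Proof.
  unfold energy.
  repeat apply quad_decay_plus; apply quad_decay_scal || idtac;
    apply (quad_decay_sq mu); auto.
  now apply exp_decay_sub; [|apply exp_decay_scal].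
Qed.

Theorem weighted_integral_pos :
  exists I, improper_integral_R (fun z => P z ^ 2 - Q z ^ 2 / eps) I /\ 0 < I.
Proof.
  destruct energy_pos as [z0 Hz0].
  destruct (improper_integral_R_pos energy z0 energy_continuous energy_nonneg
    energy_quad_decay Hz0) as [I [HI HIpos]].
  exists I. split; [|exact HIpos].
  apply (improper_integral_R_ext _ _ _ (fun z => eq_sym (energy_identity z))).
  assert (Hlim : quad_decay (fun z => 2 * k / eps ^ 2 * (Q z * Q1 z)))
    by (apply quad_decay_scal, (quad_decay_mul mu); assumption).
  apply quad_decay_lim in Hlim as [Hp Hm].
  eapply improper_integral_R_sub_deriv; [exact HI | | exact Hp | exact Hm].
  intro z. apply derivable_pt_lim_scal, derivable_pt_lim_mult; auto.
Qed.

End WeightedEnergy.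

Theorem theorem5p3 :
  forall (a gamma eps c lambda : R)
    (uh uh1 uh2 vh vh1 vh2 p p1 p2 q q1 q2 : R -> R),
    0 < a -> a < 1 / 2 -> 0 < gamma -> 0 < eps -> c < 0 ->
    traveling_pulse a gamma eps c uh uh1 uh2 vh vh1 vh2 ->
    eps < c ^ 4 / 16 ->
    0 <= lambda ->
    eigenfunction a gamma eps c uh lambda p p1 p2 q q1 q2 ->
    (* the exponential decay of eigenfunctions asserted in the setup,
       fast enough that the weighted integral converges *)
    (exists K mu, 0 < mu /\ forall z,
       Rabs (p z) + Rabs (p1 z) + Rabs (q z) + Rabs (q1 z)
       <= K * exp (- (c / 2) * z - mu * Rabs z)) ->
    exists I,
      improper_integral_R (fun z => exp (c * z) * (p z ^ 2 - q z ^ 2 / eps)) I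
      /\ I > 0.
Proof.
  intros a gamma eps c lambda uh uh1 uh2 vh vh1 vh2 p p1 p2 q q1 q2
    _ _ Hgamma Heps Hc _ Heps_c Hlambda
    [[Hp _] [[Hq Hq1] [_ [Hq2 [_ [_ [_ [_ [z0 Hz0]]]]]]]]] [K [mu [Hmu Hbound]]].
  set (k := c ^ 2 / 4 + (lambda + eps * gamma)).
  assert (Hk : c ^ 2 / 4 <= k) by (unfold k; nra).
  destruct (weight_eigenfunction_decay c mu K p p1 q q1 Hbound) as [HPd [HQd HQ1d]].
  destruct (weighted_integral_pos eps k mu (weight c p) (weight c q)
    (fun z => weight c q1 z + c / 2 * weight c q z)) as [J [HJ HJpos]];
    try assumption.
  - assert (0 < c ^ 2) by nra. lra.
  - replace (c ^ 4 / 16) with ((c ^ 2 / 4) ^ 2) in Heps_c by field. nra.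
  - intro z. apply weight_derivable, Hq.
  - intro z. apply (weight_second_derivable c _ eps p q q1 q2 z (Hq z) (Hq1 z)).
    specialize (Hq2 z). lra.
  - intro z. apply weight_continuous, derivable_continuous_pt. exists (p1 z). apply Hp.
  - exists z0. unfold weight. pose proof (exp_pos (c * z0 / 2)).
    destruct Hz0; [left | right]; apply Rmult_integral_contrapositive; split; lra.
  - exists J. split; [|exact HJpos]. eapply improper_integral_R_ext; [|exact HJ].
    intro z. unfold weight.
    assert (Hexp : exp (c * z) = exp (c * z / 2) * exp (c * z / 2))
      by (rewrite <- exp_plus; f_equal; field).
    rewrite Hexp. field. lra.
Qed.
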